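(* Let $\epsilon>0$, let $\mathbf{w}\in\mathbb{R}^d$ be non-increasing, and let $1\le k\le d-1$ with $\mathbf{w}^k_{max}>\mathbf{w}^k_{min}$. For every scored vote $v\in\mathbb{D}_v$, the private view $\tilde v$ output by the additive mechanism satisfies $\mathbb{E}[\tilde v]=v$.
   Context: Candidates are $C_1,\dots,C_d$; a vote is a linear ordering; the scored vote $v$ assigns score $w_j$ to the candidate at rank $j$; $\mathbb{D}_v$ is the set of permutations of $\mathbf{w}$. Let $\mathcal{C}^k$ be the set of $k$-element subsets of candidates, $\mathbf{w}^k_{max}=\sum_{j=1}^kw_j$, $\mathbf{w}^k_{min}=\sum_{j=d-k+1}^dw_j$, $W=\sum_{j=1}^dw_j$. The additive mechanism on input $v$ outputs $S\in\mathcal{C}^k$ with probability $$\Pr[S\mid v]=\frac{\sum_{C_{j'}\in S}v_{j'}-\mathbf{w}^k_{min}}{\mathbf{w}^k_{max}-\mathbf{w}^k_{min}}\cdot\frac{e^\epsilon-1}{\Phi}+\frac1\Phi,\qquad \Phi=\binom dk\frac{\frac kd(e^\epsilon-1)W-e^\epsilon\mathbf{w}^k_{min}+\mathbf{w}^k_{max}}{\mathbf{w}^k_{max}-\mathbf{w}^k_{min}},$$ and the private view $\tilde v_j=a_k[C_j\in S]-b_k$, where $a_k=\big[W(e^\epsilon-1)-\tfrac dke^\epsilon\mathbf{w}^k_{min}+\tfrac dk\mathbf{w}^k_{max}\big]\frac{d-1}{(d-k)(e^\epsilon-1)}$ and $b_k=\big[\tfrac{(k-1)(e^\epsilon-1)}{d-1}W-e^\epsilon\mathbf{w}^k_{min}+\mathbf{w}^k_{max}\big]\frac{d-1}{(d-k)(e^\epsilon-1)}$.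 *)

From HB Require Import structures.
From mathcomp Require Import all_boot all_order all_algebra.
From mathcomp Require Import fingroup perm.
From mathcomp Require Import reals sequences exp.
Set Implicit Arguments. Unset Strict Implicit. Unset Printing Implicit Defensive.
Import Order.TTheory GRing.Theory Num.Theory.
Local Open Scope ring_scope.

Section Additive.
Variables (R : realType) (d k : nat) (eps : R) (w : 'I_d -> R).

(* Candidates C_1..C_d are indexed by 'I_d (0-based); rank j (1-based) is
   index j-1. *)
Definition wmax : R := \sum_(j < d | (j < k)%N) w j.
Definition wmin : R := \sum_(j < d | (d - k <= j)%N) w j.
Definition Wsum : R := \sum_(j < d) w j.

(* Scored votes: D_v = permutations of w; v j = score of candidate C_j *)
Definition is_scored_vote (v : 'I_d -> R) : Prop :=
  exists s : 'S_d, forall j, v j = w (s j).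

Definition Phi : R :=
  'C(d, k)%:R * ((k%:R / d%:R) * (expR eps - 1) * Wsum
                 - expR eps * wmin + wmax) / (wmax - wmin).

(* Pr[S | v] for a k-subset S *)
Definition add_prob (v : 'I_d -> R) (S : {set 'I_d}) : R :=
  (\sum_(j in S) v j - wmin) / (wmax - wmin) * ((expR eps - 1) / Phi)
  + 1 / Phi.

Definition a_coef : R :=
  (Wsum * (expR eps - 1) - (d%:R / k%:R) * expR eps * wmin
   + (d%:R / k%:R) * wmax)
  * ((d%:R - 1) / ((d - k)%:R * (expR eps - 1))).

Definition b_coef : R :=
  ((k%:R - 1) * (expR eps - 1) / (d%:R - 1) * Wsum
   - expR eps * wmin + wmax)
  * ((d%:R - 1) / ((d - k)%:R * (expR eps - 1))).

Definition priv_view (S : {set 'I_d}) (j : 'I_d) : R :=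
  a_coef * (j \in S)%:R - b_coef.

Definition expected_priv_view (v : 'I_d -> R) (j : 'I_d) : R :=
  \sum_(S : {set 'I_d} | #|S| == k) add_prob v S * priv_view S j.

End Additive.

(* The additive mechanism draws a k-subset S with probability proportional to the affine weight
   (e^eps - 1) * sum_(i in S) v_i + w_max - e^eps * w_min.  Counting the k-subsets that contain
   one, resp. two, given candidates shows that Pr[C_j in S] is an affine function of v_j alone
   (the other scores enter only through sum_i v_i = W, as v is a permutation of w).  Its slope
   is nonzero because w is non-increasing, so the k smallest weights have mean at most W / d,
   and a_k, b_k are precisely the coefficients of the inverse affine map. *)

From HB Require Import structures.
From mathcomp Require Import all_boot all_order all_algebra.
From mathcomp Require Import fingroup perm.
From mathcomp Require Import reals sequences exp.
From mathcomp Require Import zify ring lra.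
Import Order.TTheory GRing.Theory Num.Theory.
Local Open Scope ring_scope.

(* Binomials are written 'C(n.-1, n - k) and 'C(n.-2, n - k), as counts of complements, rather
   than 'C(n - 1, k - 1) and 'C(n - 2, k - 2): this form stays correct for k = 0, 1, where the
   truncated k.-1 and k.-2 would not. *)
Lemma mul_bin_pred_sub n k : (k <= n)%N -> (n * 'C(n.-1, n - k) = k * 'C(n, k))%N.
Proof.
case: k => [|k] le_kn; first by case: n {le_kn} => // n; rewrite subn0 bin_small ?muln0.
have -> : (n - k.+1 = n.-1 - k)%N by lia.
by rewrite -mul_bin_diag bin_sub //; lia.
Qed.

Lemma mul_bin_pred2_sub n k : (1 <= k <= n)%N ->
  (n.-1 * 'C(n.-2, n - k) = k.-1 * 'C(n.-1, n - k))%N.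
Proof.
case/andP=> ge1_k le_kn.
have -> : (n - k = n.-1 - k.-1)%N by lia.
rewrite mul_bin_pred_sub; last by lia.
by rewrite bin_sub //; lia.
Qed.

Lemma bin_pred_sub_ratio (F : numFieldType) n k : (0 < n)%N -> (k <= n)%N ->
  'C(n.-1, n - k)%:R = k%:R / n%:R * 'C(n, k)%:R :> F.
Proof.
move=> n_gt0 le_kn; apply: (mulfI (_ : n%:R != 0 :> F)); first by rewrite pnatr_eq0 -lt0n.
by rewrite -natrM mul_bin_pred_sub // natrM mulrA mulrCA divff ?mulr1 // pnatr_eq0 -lt0n.
Qed.

Lemma bin_pred2_sub_ratio (F : numFieldType) n k : (1 < n)%N -> (1 <= k <= n)%N ->
  'C(n.-2, n - k)%:R = (k%:R - 1) / (n%:R - 1) * 'C(n.-1, n - k)%:R :> F.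
Proof.
move=> n_gt1 /[dup] k_range /andP[k_gt0 _].
have natr_pred m : (0 < m)%N -> m.-1%:R = m%:R - 1 :> F by move=> ?; rewrite -subn1 natrB.
have n1_neq0 : n%:R - 1 != 0 :> F by rewrite -natr_pred ?pnatr_eq0; lia.
apply: (mulfI n1_neq0); rewrite mulrA mulrCA divff // mulr1.
by rewrite -!natr_pred ?(ltnW n_gt1) // -!natrM mul_bin_pred2_sub.
Qed.

Section Draws.
Variables (T : finType) (k : nat).
Hypothesis le_k : (k <= #|T|)%N.

Lemma card_draws_supset (A : {set T}) :
  #|[set S : {set T} | A \subset S & #|S| == k]| = 'C(#|~: A|, #|T| - k).
Proof.
rewrite -cards_draws -(card_preimset _ (@setC_inj T)); congr #|pred_of_set _|.
apply/setP => S; rewrite !inE subsetC; congr (_ && _).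
by have := cardsC S; case: eqP; case: eqP; lia.
Qed.

Variable R : pzRingType.

Lemma sum_draws_subset (A : {set T}) :
  \sum_(S : {set T} | #|S| == k) ((A \subset S)%:R : R) = 'C(#|~: A|, #|T| - k)%:R.
Proof.
rewrite -card_draws_supset -sum1_card natr_sum big_mkcond [RHS]big_mkcond.
by apply: eq_bigr => S _; rewrite inE andbC; case: (#|S| == k); case: (A \subset S).
Qed.

Lemma sum_draws_mem (j : T) :
  \sum_(S : {set T} | #|S| == k) ((j \in S)%:R : R) = 'C(#|T|.-1, #|T| - k)%:R.
Proof.
under eq_bigr do rewrite -sub1set.
by rewrite sum_draws_subset cardsC1.
Qed.

Lemma sum_draws_mem2 (i j : T) : i != j ->
  \sum_(S : {set T} | #|S| == k) ((i \in S)%:R * (j \in S)%:R : R)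
    = 'C(#|T|.-2, #|T| - k)%:R.
Proof.
move=> neq_ij; under eq_bigr do rewrite -natrM mulnb -!sub1set -subUset.
rewrite sum_draws_subset; congr 'C(_, _)%:R.
by have := cardsC [set i; j]; rewrite cards2 neq_ij; lia.
Qed.

Variable v : T -> R.

Lemma sum_in_mem (S : {set T}) : \sum_(i in S) v i = \sum_i v i * (i \in S)%:R.
Proof. by rewrite big_mkcond; apply: eq_bigr => i _; rewrite mulr_natr mulrb. Qed.

Lemma sum_draws_sum :
  \sum_(S : {set T} | #|S| == k) \sum_(i in S) v i
    = 'C(#|T|.-1, #|T| - k)%:R * \sum_i v i.
Proof.
under eq_bigr do rewrite sum_in_mem.
rewrite exchange_big mulr_sumr; apply: eq_bigr => i _.
by rewrite -mulr_sumr sum_draws_mem // mulr_natl mulr_natr.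
Qed.

Lemma sum_draws_sum_mem (j : T) :
  \sum_(S : {set T} | #|S| == k) (\sum_(i in S) v i) * (j \in S)%:R
    = 'C(#|T|.-1, #|T| - k)%:R * v j
      + 'C(#|T|.-2, #|T| - k)%:R * \sum_(i | i != j) v i.
Proof.
under eq_bigr do rewrite sum_in_mem mulr_suml.
rewrite exchange_big (bigD1 j) //= mulr_sumr; congr (_ + _).
  under eq_bigr do rewrite -mulrA -natrM mulnb andbb.
  by rewrite -mulr_sumr sum_draws_mem // mulr_natl mulr_natr.
apply: eq_bigr => i neq_ij; under eq_bigr do rewrite -mulrA.
by rewrite -mulr_sumr sum_draws_mem2 // mulr_natl mulr_natr.
Qed.

End Draws.

Lemma card_ord_lt d m : (m <= d)%N -> #|[pred i : 'I_d | (i < m)%N]| = m.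
Proof. by move=> le_md; rewrite -sum1_card (big_ord_narrow le_md) sum1_card card_ord. Qed.

Lemma tail_mean_le_mean (R : realDomainType) d k (w : 'I_d -> R) :
  (forall i j : 'I_d, (i <= j)%N -> w j <= w i) -> (k <= d)%N ->
  d%:R * \sum_(j < d | (d - k <= j)%N) w j <= k%:R * \sum_(j < d) w j.
Proof.
move=> w_noninc le_kd; set m := (d - k)%N.
have card_head := @card_ord_lt d m (leq_subr k d).
have card_tail : #|[pred i : 'I_d | (m <= i)%N]| = k.
  have := cardC [pred i : 'I_d | (i < m)%N]; rewrite card_head card_ord.
  have -> : #|[predC [pred i : 'I_d | (i < m)%N]]| = #|[pred i : 'I_d | (m <= i)%N]|.
    by apply: eq_card => i; rewrite !inE -leqNgt.
  by rewrite /m; lia.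
set head := \sum_(i < d | (i < m)%N) w i; set tail := \sum_(i < d | (m <= i)%N) w i.
have split_sum : \sum_(i < d) w i = head + tail.
  rewrite (bigID (fun i : 'I_d => (i < m)%N)) /=; congr (_ + _).
  by apply: eq_bigl => i; rewrite -leqNgt.
have : \sum_(i < d | (i < m)%N) tail <= \sum_(j < d | (m <= j)%N) head.
  rewrite /tail /head [in X in _ <= X]exchange_big /=.
  apply: ler_sum => i lt_im; apply: ler_sum => j le_mj.
  by apply: w_noninc; apply: ltnW; apply: leq_trans le_mj.
rewrite !sumr_const card_head card_tail -mulr_natl -(mulr_natl head) => tail_le_head.
have split_d : d%:R = m%:R + k%:R :> R by rewrite -natrD subnK.
rewrite split_sum split_d; lra.
Qed.

Section AdditiveMechanism.
Variables (R : realType) (d k : nat) (eps : R) (w : 'I_d -> R).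

Definition add_weight (v : 'I_d -> R) (S : {set 'I_d}) : R :=
  (expR eps - 1) * \sum_(i in S) v i + wmax k w - expR eps * wmin k w.

Definition mean_weight : R :=
  k%:R / d%:R * (expR eps - 1) * Wsum w - expR eps * wmin k w + wmax k w.

Definition incl_prob (x : R) : R :=
  k%:R / d%:R * ((expR eps - 1) * ((d - k)%:R * x + (k%:R - 1) * Wsum w) / (d%:R - 1)
                 + wmax k w - expR eps * wmin k w) / mean_weight.

Lemma add_probE v S : wmin k w != wmax k w ->
  add_prob k eps w v S = add_weight v S / ('C(d, k)%:R * mean_weight).
Proof.
move=> neq_wmin_wmax; rewrite /add_prob /Phi -/mean_weight -mulrA.
have [->|nz] := eqVneq ('C(d, k)%:R * mean_weight) 0.
  by rewrite !(mul0r, invr0, mulr0, addr0).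
move: nz; rewrite mulf_eq0 negb_or => /andP[nzC nzD].
by rewrite /add_weight; field; rewrite nzC nzD subr_eq0 eq_sym neq_wmin_wmax.
Qed.

Lemma expected_priv_viewE v j :
  expected_priv_view k eps w v j
    = a_coef k eps w * \sum_(S : {set 'I_d} | #|S| == k) add_prob k eps w v S * (j \in S)%:R
      - b_coef k eps w * \sum_(S : {set 'I_d} | #|S| == k) add_prob k eps w v S.
Proof.
rewrite /expected_priv_view !mulr_sumr -sumrB; apply: eq_bigr => S _.
by rewrite /priv_view; ring.
Qed.

Hypotheses (eps_gt0 : 0 < eps) (w_noninc : forall i j : 'I_d, (i <= j)%N -> w j <= w i).
Hypotheses (k_gt0 : (1 <= k)%N) (lt_kd : (k <= d - 1)%N) (lt_wmin_wmax : wmin k w < wmax k w).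

Let d_gt1 : (1 < d)%N. Proof. by lia. Qed.
Let d_gt0 : (0 < d)%N. Proof. by lia. Qed.
Let k_range : (1 <= k <= d)%N. Proof. by lia. Qed.
Let le_kd : (k <= d)%N. Proof. by lia. Qed.
Let d_neq0 : d%:R != 0 :> R. Proof. by rewrite pnatr_eq0 -lt0n. Qed.
Let d1_neq0 : d%:R - 1 != 0 :> R. Proof. by rewrite subr_eq0 pnatr_eq1; lia. Qed.

Lemma mean_weight_gt0 : 0 < mean_weight.
Proof.
have wmin_le : wmin k w <= k%:R / d%:R * Wsum w.
  by rewrite mulrAC ler_pdivlMr ?ltr0n // mulrC; apply: tail_mean_le_mean.
have e_gt1 : 1 < expR eps := pexpR_gt1 eps_gt0.
have -> : mean_weight
    = (expR eps - 1) * (k%:R / d%:R * Wsum w - wmin k w) + (wmax k w - wmin k w).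
  by rewrite /mean_weight; ring.
by apply: ltr_wpDl; [apply: mulr_ge0 | ]; rewrite ?subr_ge0 ?subr_gt0 // ltW.
Qed.

Let neq_wmin_wmax : wmin k w != wmax k w. Proof. by rewrite lt_eqF. Qed.
Let total_weight_neq0 : 'C(d, k)%:R * mean_weight != 0.
Proof. by rewrite mulf_neq0 // lt0r_neq0 ?mean_weight_gt0 // ltr0n bin_gt0. Qed.

Lemma a_coef_incl_prob x : a_coef k eps w * incl_prob x - b_coef k eps w = x.
Proof.
have nz_e1 : expR eps - 1 != 0 by rewrite subr_eq0 gt_eqF ?pexpR_gt1.
have nz_k : k%:R != 0 :> R by rewrite pnatr_eq0 -lt0n.
have nz_dk : d%:R - k%:R != 0 :> R by rewrite subr_eq0 eqr_nat; lia.
have nz_dD : k%:R * (expR eps - 1) * Wsum w + - (expR eps * wmin k w) * d%:R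
              + wmax k w * d%:R != 0.
  have <- : d%:R * mean_weight = k%:R * (expR eps - 1) * Wsum w
              + - (expR eps * wmin k w) * d%:R + wmax k w * d%:R.
    by rewrite /mean_weight; field.
  by rewrite mulf_neq0 // lt0r_neq0 ?mean_weight_gt0.
rewrite /incl_prob /a_coef /b_coef /mean_weight natrB //.
by field; rewrite nz_e1 nz_dk d1_neq0 d_neq0 nz_dD nz_k.
Qed.

Variables (v : 'I_d -> R) (v_vote : is_scored_vote w v).

Lemma sum_scored_vote : \sum_i v i = Wsum w.
Proof.
case: v_vote => s vE; rewrite (eq_bigr _ (fun i _ => vE i)).
by rewrite /Wsum [RHS](reindex_inj (@perm_inj _ s)).
Qed.

Lemma sum_add_weight :
  \sum_(S : {set 'I_d} | #|S| == k) add_weight v S = 'C(d, k)%:R * mean_weight.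
Proof.
have card_k : #|[pred S : {set 'I_d} | #|S| == k]| = 'C(d, k).
  by rewrite -[d in 'C(d, _)]card_ord -card_draws; apply: eq_card => S; rewrite !inE.
under eq_bigr do rewrite /add_weight -addrA.
rewrite big_split /= -mulr_sumr sum_draws_sum ?card_ord // sumr_const card_k.
by rewrite sum_scored_vote bin_pred_sub_ratio // -mulr_natl /mean_weight; ring.
Qed.

Lemma sum_add_prob : \sum_(S : {set 'I_d} | #|S| == k) add_prob k eps w v S = 1.
Proof.
under eq_bigr do rewrite add_probE //.
by rewrite -mulr_suml sum_add_weight divff.
Qed.

Lemma sum_add_prob_mem j :
  \sum_(S : {set 'I_d} | #|S| == k) add_prob k eps w v S * (j \in S)%:R = incl_prob (v j).
Proof.
have sum_others : \sum_(i | i != j) v i = Wsum w - v j.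
  by rewrite -sum_scored_vote [in RHS](bigD1 j) //= addrAC subrr add0r.
under eq_bigr do rewrite add_probE // mulrAC /add_weight -addrA mulrDl -mulrA.
rewrite -mulr_suml big_split /= -!mulr_sumr sum_draws_sum_mem ?sum_draws_mem ?card_ord //.
rewrite sum_others bin_pred2_sub_ratio // bin_pred_sub_ratio // /incl_prob natrB //.
move: total_weight_neq0; rewrite mulf_eq0 negb_or => /andP[nzC nzD].
by field; rewrite nzC nzD d_neq0 d1_neq0.
Qed.

End AdditiveMechanism.

Theorem lemma6p3 (R : realType) (d k : nat) (eps : R) (w : 'I_d -> R)
  (heps : 0 < eps)
  (hw : forall i j : 'I_d, (i <= j)%N -> w j <= w i)
  (hk1 : (1 <= k)%N) (hkd : (k <= d - 1)%N)
  (hmm : wmin k w < wmax k w)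
  (v : 'I_d -> R) (hv : is_scored_vote w v) :
  forall j : 'I_d, expected_priv_view k eps w v j = v j.
Proof.
move=> j; rewrite expected_priv_viewE sum_add_prob_mem // sum_add_prob // mulr1.
by rewrite a_coef_incl_prob.
Qed.
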